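(* Let $q,m,k,s_1,\ldots,s_u$ be positive integers such that $q$ is a prime power and $m\leq q$. Assume that there exist a weighing matrix of order $m$ and weight $k$ and an orthogonal design of order $m$ and type $(s_1,\ldots,s_u)$. Then: (1) there exist $m$ mutually unbiased orthogonal designs of order $mq$ and type $(ks_1,\ldots,ks_u)$ with parameter $\alpha=k^2$; (2) for every nonempty subset $S\subseteq\{1,\ldots,u\}$ there exist $m$ mutually quasi-unbiased weighing matrices for the parameters $\left(mq,\;k\sum_{i\in S}s_i,\;k^2,\;(\sum_{i\in S}s_i)^2\right)$.
   Context: A weighing matrix of order $n$ and weight $k$ is an $n\times n$ matrix $W$ with entries in $\{0,1,-1\}$ such that $WW^\top=kI_n$. Let $x_1,\ldots,x_u$ be distinct commuting real indeterminates. An orthogonal design of order $n$ and type $(s_1,\ldots,s_u)$ in the variables $x_1,\ldots,x_u$ is an $n\times n$ matrix $D$ with entries in $\{0,\pm x_1,\ldots,\pm x_u\}$ such that $DD^\top=(s_1x_1^2+\cdots+s_ux_u^2)I_n$. Two orthogonal designs $D_1,D_2$ of order $n$ and type $(s_1,\ldots,s_u)$ in the same variables are unbiased with parameter $\alpha$ if $\alpha$ is a positive real number and there is a $(0,1,-1)$-matrix $W$ with $D_1D_2^\top=\frac{s_1x_1^2+\cdots+s_ux_u^2}{\sqrt{\alpha}}W$; a family is mutually unbiased with parameter $\alpha$ if any two distinct members are. Two weighing matrices $W_1,W_2$ of order $n$ and weight $k$ are quasi-unbiased for parameters $(n,k,l,a)$ if $\frac{1}{\sqrt a}W_1W_2^\top$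 is a weighing matrix of order $n$ and weight $l$; a family is mutually quasi-unbiased for these parameters if any two distinct members are. *)

From HB Require Import structures.
From mathcomp Require Import all_boot all_order all_algebra.
From mathcomp Require Import mpoly.
Set Implicit Arguments. Unset Strict Implicit. Unset Printing Implicit Defensive.
Import Order.TTheory GRing.Theory Num.Theory.
Local Open Scope ring_scope.

Definition prime_power (q : nat) : Prop :=
  exists p e : nat, prime p /\ (0 < e)%N /\ q = (p ^ e)%N.

Definition zpm_mx (n : nat) (W : 'M[int]_n) : Prop :=
  forall i j, W i j = 0 \/ W i j = 1 \/ W i j = -1.

Definition weighing_matrix (n k : nat) (W : 'M[int]_n) : Prop :=
  zpm_mx W /\ W *m W^T = (k%:Z)%:M.

Definition od_form (R : rcfType) (u : nat) (s : 'I_u -> nat) : {mpoly R[u]} :=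
  \sum_(l < u) (s l)%:R * 'X_l ^+ 2.

Definition orthogonal_design (R : rcfType) (n u : nat) (s : 'I_u -> nat)
    (D : 'M[{mpoly R[u]}]_n) : Prop :=
  (forall i j, D i j = 0 \/ exists l : 'I_u, D i j = 'X_l \/ D i j = - 'X_l)
  /\ D *m D^T = (od_form R s)%:M.

Definition unbiased_od (R : rcfType) (n u : nat) (s : 'I_u -> nat) (alpha : R)
    (D1 D2 : 'M[{mpoly R[u]}]_n) : Prop :=
  0 < alpha /\
  exists W : 'M[int]_n, zpm_mx W /\
    D1 *m D2^T = ((Num.sqrt alpha)^-1 *: od_form R s) *: map_mx (fun z : int => z%:~R) W.

Definition mutually_unbiased_ods (R : rcfType) (m n u : nat) (s : 'I_u -> nat)
    (alpha : R) (F : 'I_m -> 'M[{mpoly R[u]}]_n) : Prop :=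
  injective F /\
  (forall i, orthogonal_design s (F i)) /\
  (forall i j, i != j -> unbiased_od s alpha (F i) (F j)).

Definition quasi_unbiased (R : rcfType) (n k l : nat) (a : R) (W1 W2 : 'M[int]_n) : Prop :=
  weighing_matrix k W1 /\ weighing_matrix k W2 /\
  exists W : 'M[int]_n, weighing_matrix l W /\
    (Num.sqrt a)^-1 *: map_mx (fun z : int => z%:~R : R) (W1 *m W2^T)
      = map_mx (fun z : int => z%:~R) W.

Definition mutually_quasi_unbiased (R : rcfType) (m n k l : nat) (a : R)
    (F : 'I_m -> 'M[int]_n) : Prop :=
  injective F /\
  (forall i, weighing_matrix k (F i)) /\
  (forall i j, i != j -> quasi_unbiased k l a (F i) (F j)).

From HB Require Import structures.
From mathcomp Require Import all_boot all_order all_algebra.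
From mathcomp Require Import mpoly.
From mathcomp Require Import fingroup perm finfield.
Import Order.TTheory GRing.Theory Num.Theory.
Local Open Scope ring_scope.

(* Index the rows and columns of the order-mq matrices by 'I_m * F_q and put
   M(rho, A) := (W (x) I_q) P_rho (A (x) I_q) for a permutation rho of 'I_m * F_q.
   If A B^T = z I then M(rho1, A) M(rho2, B)^T = z M(rho1 rho2^-1, W^T), and if
   c |-> snd (rho (c, x)) is injective for every x, each entry of M(rho, A) is
   0 or a single product W_ac A_db.  For m <= q, affine maps over the field F_q
   give m permutations rho_i such that all rho_i and all quotients
   rho_i rho_j^-1 have this property.  Taking A = D yields the unbiased orthogonal
   designs; taking for A the weighing matrix obtained from D by setting the
   variables of S to 1 and the others to 0 yields the quasi-unbiased weighing
   matrices. *)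

Set Implicit Arguments. Unset Strict Implicit. Unset Printing Implicit Defensive.

Section ProductIndex.
Variables (m q : nat) (F : finType).
Hypothesis cardF : #|F| = q.
Local Notation T := ('I_m * F)%type.

Lemma card_idx : #|{: T}| = (m * q)%N.
Proof. by rewrite card_prod card_ord cardF. Qed.

Definition idx (t : T) : 'I_(m * q) := cast_ord card_idx (enum_rank t).
Definition unidx (r : 'I_(m * q)) : T := enum_val (cast_ord (esym card_idx) r).

Lemma idxK : cancel idx unidx.
Proof. by move=> t; rewrite /unidx /idx cast_ordK enum_rankK. Qed.

Lemma unidxK : cancel unidx idx.
Proof. by move=> r; rewrite /unidx /idx enum_valK cast_ordKV. Qed.

Variant idx_spec : 'I_(m * q) -> Type := IdxSpec a x : idx_spec (idx (a, x)).

Lemma idxP r : idx_spec r.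
Proof. by rewrite -(unidxK r); case: (unidx r). Qed.

Lemma sum_idx (R : nmodType) (G : 'I_(m * q) -> R) :
  \sum_r G r = \sum_a \sum_x G (idx (a, x)).
Proof.
rewrite (reindex idx); last by exists unidx => t _; rewrite ?idxK ?unidxK.
by rewrite pair_bigA; apply: eq_bigr => -[].
Qed.

Lemma sum_delta (R : pzSemiRingType) (x0 : F) (G : F -> R) :
  \sum_x (x0 == x)%:R * G x = G x0.
Proof.
rewrite (bigD1 x0) //= eqxx mul1r big1 ?addr0 // => x /negPf.
by rewrite eq_sym => ->; rewrite mul0r.
Qed.

Definition idx_perm (rho : {perm T}) : 'S_(m * q) :=
  perm (inj_comp (can_inj idxK) (inj_comp (@perm_inj _ rho) (can_inj unidxK))).

Lemma idx_permE rho t : idx_perm rho (idx t) = idx (rho t).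
Proof. by rewrite permE /= idxK. Qed.

Lemma idx_permM rho1 rho2 : idx_perm (rho1 * rho2) = (idx_perm rho1 * idx_perm rho2)%g.
Proof. by apply/permP => r; case/idxP: r => a x; rewrite permM !idx_permE permM. Qed.

Lemma idx_perm1 : idx_perm 1 = 1%g.
Proof. by apply/permP => r; case/idxP: r => a x; rewrite idx_permE !perm1. Qed.

Lemma idx_permV rho : idx_perm rho^-1 = (idx_perm rho)^-1%g.
Proof.
by rewrite -[LHS]mul1g -(mulVg (idx_perm rho)) -mulgA -idx_permM mulgV idx_perm1 mulg1.
Qed.

Lemma idx_perm_inj : injective idx_perm.
Proof.
by move=> rho1 rho2 E; apply/permP => t; apply: (can_inj idxK); rewrite -!idx_permE E.
Qed.

Section Tensor.
Variable R : comNzRingType.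

Definition tensor1mx (A : 'M[R]_m) : 'M[R]_(m * q) :=
  \matrix_(r, r') (A (unidx r).1 (unidx r').1 * ((unidx r).2 == (unidx r').2)%:R).

Lemma tensor1mxE A t t' : tensor1mx A (idx t) (idx t') = A t.1 t'.1 * (t.2 == t'.2)%:R.
Proof. by rewrite mxE !idxK. Qed.

Lemma mul_tensor1mx A B : tensor1mx A *m tensor1mx B = tensor1mx (A *m B).
Proof.
apply/matrixP => r r'; case/idxP: r => a x; case/idxP: r' => b y.
rewrite tensor1mxE !mxE sum_idx big_distrl /=; apply: eq_bigr => c _.
under eq_bigr do rewrite !tensor1mxE /= mulrACA.
by rewrite -big_distrr /= sum_delta.
Qed.

Lemma tr_tensor1mx A : (tensor1mx A)^T = tensor1mx A^T.
Proof. by apply/matrixP => r r'; rewrite !mxE eq_sym. Qed.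

Lemma tensor1mx_scalar z : tensor1mx z%:M = z%:M.
Proof.
apply/matrixP => r r'; case/idxP: r => a x; case/idxP: r' => b y.
rewrite tensor1mxE !mxE (inj_eq (can_inj idxK)) xpair_eqE.
by case: (a == b); case: (x == y); rewrite /= ?mulr1 ?mulr0.
Qed.

End Tensor.

Lemma map_tensor1mx (R1 R2 : comNzRingType) (f : {rmorphism R1 -> R2}) A :
  map_mx f (tensor1mx A) = tensor1mx (map_mx f A).
Proof. by apply/matrixP => r r'; rewrite !mxE rmorphM rmorph_nat. Qed.

End ProductIndex.

Definition spreading m (F : finType) (rho : {perm 'I_m * F}) :=
  forall x, injective (fun c => (rho (c, x)).2).

Section TensorPerm.
Variables (m q : nat) (F : finType).
Hypothesis cardF : #|F| = q.
Local Notation idx := (idx cardF).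
Local Notation tensor1mx := (tensor1mx cardF).
Local Notation idx_perm := (idx_perm cardF).
Local Notation idxP := (idxP cardF).

Section TensorPermRing.
Variables (R : comNzRingType) (W : 'M[R]_m).

Definition tensor_perm_mx (rho : {perm 'I_m * F}) (A : 'M[R]_m) : 'M[R]_(m * q) :=
  tensor1mx W *m perm_mx (idx_perm rho) *m tensor1mx A.

Lemma tensor_perm_mxE rho A a x b y :
  tensor_perm_mx rho A (idx (a, x)) (idx (b, y)) =
  \sum_c W a c * A (rho (c, x)).1 b * ((rho (c, x)).2 == y)%:R.
Proof.
rewrite /tensor_perm_mx -mulmxA -row_permE !mxE (sum_idx cardF); apply: eq_bigr => c _.
under eq_bigr do rewrite [row_perm _ _ _ _]mxE idx_permE !tensor1mxE /= -mulrA mulrCA.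
by rewrite sum_delta mulrA.
Qed.

Lemma tensor_perm_mx_entries (P : R -> Prop) rho (A : 'M[R]_m) :
  spreading rho -> P 0 -> (forall a c d b, P (W a c * A d b)) ->
  forall r r', P (tensor_perm_mx rho A r r').
Proof.
move=> spread P0 PWA r r'; case/idxP: r => a x; case/idxP: r' => b y.
rewrite tensor_perm_mxE.
have [c0 hit | miss] := pickP (fun c => (rho (c, x)).2 == y); last first.
  by rewrite big1 // => c _; rewrite miss mulr0.
rewrite (bigD1 c0) //= hit mulr1 big1 ?addr0 // => c /negPf c_c0.
case: eqP => [hit_c | _]; last by rewrite mulr0.
by move: c_c0; rewrite (spread x c c0) ?eqxx // (eqP hit) hit_c.
Qed.

Lemma tensor_perm_mx_mul_tr rho1 rho2 A B z : A *m B^T = z%:M ->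
  tensor_perm_mx rho1 A *m (tensor_perm_mx rho2 B)^T = z *: tensor_perm_mx (rho1 * rho2^-1) W^T.
Proof.
move=> AB; rewrite /tensor_perm_mx !trmx_mul !tr_tensor1mx tr_perm_mx !mulmxA.
rewrite -(mulmxA _ (tensor1mx A)) mul_tensor1mx AB tensor1mx_scalar mul_mx_scalar.
by rewrite -!scalemxAl -(mulmxA _ (perm_mx _)) -perm_mxM -idx_permV -idx_permM.
Qed.

Lemma tensor_perm_mx1 A : tensor_perm_mx 1 A = tensor1mx (W *m A).
Proof. by rewrite /tensor_perm_mx idx_perm1 perm_mx1 mulmx1 mul_tensor1mx. Qed.

End TensorPermRing.

Lemma map_tensor_perm_mx (R1 R2 : comNzRingType) (f : {rmorphism R1 -> R2}) W rho A :
  map_mx f (tensor_perm_mx W rho A) = tensor_perm_mx (map_mx f W) rho (map_mx f A).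
Proof. by rewrite /tensor_perm_mx !map_mxM !map_tensor1mx map_perm_mx. Qed.

Lemma tensor_perm_mx_inj (R : idomainType) (W A : 'M[R]_m) k z :
  W^T *m W = k%:M -> A *m A^T = z%:M -> k * z != 0 ->
  injective (tensor_perm_mx W ^~ A).
Proof.
move=> WW AA kz rho1 rho2 E; apply: (@idx_perm_inj _ _ _ cardF); apply/permP => r.
have unwrap rho : tensor1mx W^T *m tensor_perm_mx W rho A *m tensor1mx A^T =
    (k * z) *: perm_mx (idx_perm rho).
  rewrite /tensor_perm_mx !mulmxA mul_tensor1mx WW tensor1mx_scalar mul_scalar_mx.
  rewrite -!scalemxAl -mulmxA mul_tensor1mx AA tensor1mx_scalar mul_mx_scalar.
  by rewrite scalerA mulrC.
move/matrixP: (congr1 (fun M => tensor1mx W^T *m M *m tensor1mx A^T) E).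
rewrite /= !unwrap => /(_ r (idx_perm rho1 r)); rewrite !mxE eqxx mulr1.
by case: eqP => [-> // | _]; rewrite mulr0 => /eqP; rewrite (negPf kz).
Qed.

End TensorPerm.

Definition zpm_entry (z : int) : Prop := z = 0 \/ z = 1 \/ z = -1.

Definition od_entry (R : nzRingType) u (d : {mpoly R[u]}) : Prop :=
  d = 0 \/ exists l : 'I_u, d = 'X_l \/ d = - 'X_l.

Lemma zpm_entryM w d : zpm_entry w -> zpm_entry d -> zpm_entry (w * d).
Proof.
by case=> [->|[->|->]] [->|[->|->]];
  rewrite /zpm_entry ?mul0r ?mulr0 ?mul1r ?mulr1 ?mulrNN ?mulr1; auto.
Qed.

Lemma od_entry_zpmM (R : nzRingType) u w (d : {mpoly R[u]}) :
  zpm_entry w -> od_entry d -> od_entry (w%:~R * d).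
Proof.
case=> [->|[->|->]]; first by left; rewrite mul0r.
  by rewrite mul1r.
case=> [->|[l [->|->]]]; first by left; rewrite mulr0.
  by right; exists l; right; rewrite mulN1r.
by right; exists l; left; rewrite mulN1r opprK.
Qed.

Section TensorPermEntries.
Variables (m q : nat) (F : finType) (cardF : #|F| = q) (rho : {perm 'I_m * F}).
Hypothesis spread : spreading rho.

Lemma tensor_perm_mx_zpm (W A : 'M[int]_m) :
  zpm_mx W -> zpm_mx A -> zpm_mx (tensor_perm_mx cardF W rho A).
Proof.
move=> zW zA; apply: (tensor_perm_mx_entries cardF (P := zpm_entry)) => //; first by left.
by move=> a c d b; apply: zpm_entryM.
Qed.

Lemma tensor_perm_mx_od (R : comNzRingType) u (W : 'M[int]_m) (A : 'M[{mpoly R[u]}]_m) :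
  zpm_mx W -> (forall i j, od_entry (A i j)) ->
  forall r r', od_entry (tensor_perm_mx cardF (map_mx intr W) rho A r r').
Proof.
move=> zW zA; apply: (tensor_perm_mx_entries cardF) => //; first by left.
by move=> a c d b; rewrite mxE; apply: od_entry_zpmM.
Qed.

End TensorPermEntries.

Definition spreading_family m (F : finType) (sg : 'I_m -> {perm 'I_m * F}) :=
  [/\ injective sg, forall i, spreading (sg i)
    & forall i j, i != j -> spreading (sg i * (sg j)^-1)%g].

Lemma affine_diff_inj (F : fieldType) (T : Type) (g : T -> F) (x a b : F) :
  injective g -> a != b -> injective (fun c => x + a * g c - b * g c).
Proof.
move=> g_inj ab c c' /eqP; rewrite -!addrA -!mulrBl (inj_eq (addrI _)) => /eqP.
by move/(mulfI _) => eq_g; apply: g_inj; apply: eq_g; rewrite subr_eq0.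
Qed.

Section SpreadingFamilies.
Variables (F : finFieldType) (m : nat).

Lemma spreading_family_lt : (m < #|F|)%N ->
  exists sg : 'I_m -> {perm 'I_m * F}, spreading_family sg.
Proof.
move=> lt_m_F.
have le_m_F1 : (m <= #|[set~ (0 : F)%R]|)%N by rewrite cardsC1 -ltnS (ltn_predK lt_m_F).
pose e (c : 'I_m) : F := enum_val (widen_ord le_m_F1 c).
have e_inj : injective e by move=> c c' /enum_val_inj /(congr1 val) /= /val_inj.
have e_neq0 c : e c != 0 by have := enum_valP (widen_ord le_m_F1 c); rewrite !inE.
have shear_inj i : injective (fun t : 'I_m * F => (t.1, t.2 + e i * e t.1)).
  by move=> [c x] [c' x'] /= [<-] /addIr ->.
pose sg i := perm (shear_inj i).
have sgE i t : sg i t = (t.1, t.2 + e i * e t.1) by rewrite permE.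
have sgVE j c y : (sg j)^-1%g (c, y) = (c, y - e j * e c).
  by apply: (@perm_inj _ (sg j)); rewrite permKV sgE /= subrK.
exists sg; split.
- move=> i j sg_ij; have := sgE i (i, 0); rewrite sg_ij sgE /= => -[].
  by rewrite !add0r => /(mulIf (e_neq0 i)) /e_inj.
- by move=> i x c c'; rewrite !sgE /= => /addrI /(mulfI (e_neq0 i)) /e_inj.
- move=> i j ij x c c' /=; rewrite !permM !sgE !sgVE /=.
  by apply: (affine_diff_inj (x := x) e_inj); rewrite (inj_eq e_inj).
Qed.

(* When m = #|F| a shear by e i * e c cannot avoid e i = 0, so sg i moves
   both coordinates, through a bijection h : 'I_m -> F. *)
Lemma spreading_family_eq : m = #|F| ->
  exists sg : 'I_m -> {perm 'I_m * F}, spreading_family sg.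
Proof.
move=> eq_m_F.
pose h (c : 'I_m) : F := enum_val (cast_ord eq_m_F c).
pose h' (x : F) : 'I_m := cast_ord (esym eq_m_F) (enum_rank x).
have hK : cancel h h' by move=> c; rewrite /h /h' enum_valK cast_ordK.
have h'K : cancel h' h by move=> x; rewrite /h /h' cast_ordKV enum_rankK.
have h_inj := can_inj hK; have h'_inj := can_inj h'K.
have swap_inj i : injective (fun t : 'I_m * F => (h' (t.2 + h i * h t.1), h t.1)).
  move=> [c x] [c' x'] /= eq_t; have /h_inj eq_c := congr1 snd eq_t.
  by rewrite -eq_c in eq_t *; have /h'_inj /addIr -> := congr1 fst eq_t.
pose sg i := perm (swap_inj i).
have sgE i t : sg i t = (h' (t.2 + h i * h t.1), h t.1) by rewrite permE.
have sgVE j c y : (sg j)^-1%g (c, y) = (h' y, h c - h j * y).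
  by apply: (@perm_inj _ (sg j)); rewrite permKV sgE /= h'K subrK hK.
exists sg; split.
- move=> i j sg_ij; have /(congr1 (h \o fst)) := sgE i (h' 1, 0).
  by rewrite sg_ij sgE /= !h'K !mulr1 !add0r => /h_inj ->.
- by move=> i x c c'; rewrite !sgE /= => /h_inj.
- move=> i j ij x c c' /=; rewrite !permM !sgE !sgVE /= !h'K.
  by apply: (affine_diff_inj (x := x) h_inj); rewrite (inj_eq h_inj).
Qed.

Lemma exists_spreading_family : (m <= #|F|)%N ->
  exists sg : 'I_m -> {perm 'I_m * F}, spreading_family sg.
Proof.
by rewrite leq_eqVlt => /orP[/eqP|]; [exact: spreading_family_eq | exact: spreading_family_lt].
Qed.

End SpreadingFamilies.

Lemma mulmx_trC (F : fieldType) n (A : 'M[F]_n) z :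
  z != 0 -> A *m A^T = z%:M -> A^T *m A = z%:M.
Proof.
move=> z_neq0 AAt; apply: (scalerI (invr_neq0 z_neq0)).
rewrite scale_scalar_mx mulVf // scalemxAl; apply: mulmx1C.
by rewrite -scalemxAr AAt scale_scalar_mx mulVf.
Qed.

Lemma intr_mx_scalar_inj (R : numDomainType) n (M : 'M[int]_n) (c : nat) :
  map_mx intr M = (c%:R : R)%:M -> M = (c%:Z)%:M.
Proof.
move/matrixP=> eqM; apply/matrixP => i j; apply: (@intr_inj R).
by have := eqM i j; rewrite !mxE => ->; case: (i == j); rewrite ?mulr0n ?mulr1n // -pmulrn.
Qed.

Lemma map_intr_scalar_mx (R : pzRingType) n (c : nat) :
  map_mx intr ((c%:Z)%:M : 'M[int]_n) = (c%:R : R)%:M.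
Proof. by rewrite map_scalar_mx /= pmulrn. Qed.

Section WeighingMatrix.
Variables (n k : nat) (W : 'M[int]_n).
Hypotheses (k_gt0 : (0 < k)%N) (hW : weighing_matrix k W).

Lemma weighing_matrix_trC : W^T *m W = (k%:Z)%:M.
Proof.
case: hW => _ WWt; apply: (@intr_mx_scalar_inj rat).
rewrite map_mxM -map_trmx (mulmx_trC (z := k%:R)) ?pnatr_eq0 -?lt0n //.
by rewrite map_trmx -map_mxM WWt map_intr_scalar_mx.
Qed.

Lemma weighing_matrix_trmx : weighing_matrix k W^T.
Proof. by split; [case: hW => zW _ i j; rewrite mxE | rewrite trmxK weighing_matrix_trC]. Qed.

End WeighingMatrix.

Section OrthogonalDesign.
Variables (R : rcfType) (u : nat) (s : 'I_u -> nat).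

Lemma meval_od_form (v : 'I_u -> R) : (od_form R s).@[v] = \sum_l (s l)%:R * v l ^+ 2.
Proof.
rewrite /od_form rmorph_sum; apply: eq_bigr => l _.
by rewrite rmorphM rmorph_nat rmorphXn /= mevalXU.
Qed.

Lemma od_form_scale k : od_form R (fun l => (k * s l)%N) = k%:R * od_form R s.
Proof. by rewrite /od_form mulr_sumr; apply: eq_bigr => l _; rewrite natrM mulrA. Qed.

Lemma od_form_neq0 : (exists l, 0 < s l)%N -> od_form R s != 0.
Proof.
case=> l0 s_l0; have : (od_form R s).@[fun _ => 1] != 0.
  rewrite meval_od_form; under eq_bigr do rewrite expr1n mulr1.
  by rewrite -natr_sum pnatr_eq0 -lt0n (bigD1 l0) //= addn_gt0 s_l0.
by apply: contraNneq => ->; rewrite rmorph0.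
Qed.

Lemma orthogonal_design_specialize n (D : 'M[{mpoly R[u]}]_n) (S : {set 'I_u}) :
  orthogonal_design s D -> exists E : 'M[int]_n, weighing_matrix (\sum_(l in S) s l) E.
Proof.
case=> D_entries DDt; pose v l : R := (l \in S)%:R.
have v01 l : v l = 0 \/ v l = 1 by rewrite /v; case: (l \in S); [right | left].
have D_sgz a b : (sgz (D a b).@[v])%:~R = (D a b).@[v].
  have sgz_v l : (sgz (v l))%:~R = v l by case: (v01 l) => ->; rewrite ?sgz0 ?sgz1.
  case: (D_entries a b) => [->|[l [->|->]]]; first by rewrite rmorph0 sgz0.
    by rewrite mevalXU.
  by rewrite mevalN mevalXU sgzN mulrNz sgz_v.
pose E := map_mx (fun d => sgz d.@[v]) D.
have E_meval : map_mx intr E = map_mx (meval v) D.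
  by apply/matrixP => a b; rewrite !mxE D_sgz.
exists E; split.
  by move=> a b; rewrite mxE; case: sgzP; [left | right; left | right; right].
apply: (@intr_mx_scalar_inj R); rewrite map_mxM -map_trmx E_meval map_trmx.
rewrite -map_mxM DDt map_scalar_mx /= meval_od_form natr_sum.
congr (_%:M); rewrite [RHS]big_mkcond /=; apply: eq_bigr => l _.
by rewrite /v; case: (l \in S); rewrite ?expr1n ?mulr1 ?expr0n ?mulr0.
Qed.

End OrthogonalDesign.

Lemma mulV_sqrt_sqr_natr (R : rcfType) (a : nat) :
  (0 < a)%N -> (Num.sqrt ((a ^ 2)%:R : R))^-1 * a%:R = 1.
Proof. by move=> a_gt0; rewrite natrX sqrtr_sqr ger0_norm ?ler0n // mulVf // pnatr_eq0 -lt0n. Qed.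

Section Construction.
Variables (R : rcfType) (m q k : nat) (F : finType) (cardF : #|F| = q).
Variables (W : 'M[int]_m) (sg : 'I_m -> {perm 'I_m * F}).
Hypotheses (k_gt0 : (0 < k)%N) (hW : weighing_matrix k W) (hsg : spreading_family sg).

Lemma mutually_unbiased_tensor_perm u (s : 'I_u -> nat) (D : 'M[{mpoly R[u]}]_m) :
  (exists l, 0 < s l)%N -> orthogonal_design s D ->
  mutually_unbiased_ods (fun l => (k * s l)%N) ((k ^ 2)%:R : R)
    (fun i => tensor_perm_mx cardF (map_mx intr W) (sg i) D).
Proof.
move=> [l0 s_l0] [D_entries DDt]; have [zW WWt] := hW.
have [zWt _] := weighing_matrix_trmx k_gt0 hW; have [sg_inj sg_spread sgV_spread] := hsg.
pose Wp := map_mx intr W : 'M[{mpoly R[u]}]_m.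
have WpWpt : Wp *m Wp^T = (k%:R)%:M by rewrite map_trmx -map_mxM WWt map_intr_scalar_mx.
have WptWp : Wp^T *m Wp = (k%:R)%:M.
  by rewrite map_trmx -map_mxM (weighing_matrix_trC k_gt0 hW) map_intr_scalar_mx.
split; [|split].
- have kf_neq0 : k%:R * od_form R s != 0.
    by rewrite -od_form_scale od_form_neq0 //; exists l0; rewrite muln_gt0 k_gt0.
  by move=> i j /(tensor_perm_mx_inj WptWp DDt kf_neq0) /sg_inj.
- move=> i; split; first exact: (tensor_perm_mx_od cardF (sg_spread i) zW D_entries).
  rewrite (tensor_perm_mx_mul_tr cardF _ _ _ DDt) mulgV (tensor_perm_mx1 cardF) WpWpt.
  by rewrite tensor1mx_scalar scale_scalar_mx od_form_scale mulrC.
- move=> i j ij; split; first by rewrite ltr0n expn_gt0 k_gt0.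
  exists (tensor_perm_mx cardF W (sg i * (sg j)^-1) W^T); split.
    exact: (tensor_perm_mx_zpm cardF (sgV_spread _ _ ij) zW zWt).
  rewrite (tensor_perm_mx_mul_tr cardF _ _ _ DDt) (map_tensor_perm_mx cardF) map_trmx.
  by rewrite od_form_scale mulr_natl -scaler_nat scalerA mulV_sqrt_sqr_natr // scale1r.
Qed.

Lemma mutually_quasi_unbiased_tensor_perm w (E : 'M[int]_m) :
  (0 < w)%N -> weighing_matrix w E ->
  mutually_quasi_unbiased (k * w) (k ^ 2) ((w ^ 2)%N%:R : R)
    (fun i => tensor_perm_mx cardF W (sg i) E).
Proof.
move=> w_gt0 [zE EEt]; have [zW WWt] := hW.
have [zWt WtWtt] := weighing_matrix_trmx k_gt0 hW.
have [sg_inj sg_spread sgV_spread] := hsg.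
have weighing_i i : weighing_matrix (k * w) (tensor_perm_mx cardF W (sg i) E).
  split; first exact: (tensor_perm_mx_zpm cardF (sg_spread i) zW zE).
  rewrite (tensor_perm_mx_mul_tr cardF _ _ _ EEt) mulgV (tensor_perm_mx1 cardF) WWt.
  by rewrite tensor1mx_scalar scale_scalar_mx PoszM mulrC.
split; [|split] => //.
- have kw_neq0 : k%:Z * w%:Z != 0 by rewrite mulf_neq0 // eqz_nat -lt0n.
  by move=> i j /(tensor_perm_mx_inj (weighing_matrix_trC k_gt0 hW) EEt kw_neq0) /sg_inj.
- move=> i j ij; split; [exact: weighing_i | split; first exact: weighing_i].
  exists (tensor_perm_mx cardF W (sg i * (sg j)^-1) W^T); split.
    split; first exact: (tensor_perm_mx_zpm cardF (sgV_spread _ _ ij) zW zWt).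
    rewrite (tensor_perm_mx_mul_tr cardF _ _ _ WtWtt) mulgV (tensor_perm_mx1 cardF) WWt.
    by rewrite tensor1mx_scalar scale_scalar_mx -PoszM mulnn.
  rewrite (tensor_perm_mx_mul_tr cardF _ _ _ EEt); apply/matrixP => r r'.
  by rewrite !mxE intrM -pmulrn mulrA mulV_sqrt_sqr_natr // mul1r.
Qed.

End Construction.

Unset Implicit Arguments. Set Strict Implicit.

Theorem theorem4p8 (R : rcfType) (q m k u : nat) (s : 'I_u -> nat) :
  (0 < q)%N -> (0 < m)%N -> (0 < k)%N -> (0 < u)%N -> (forall i, 0 < s i)%N ->
  prime_power q -> (m <= q)%N ->
  (exists W : 'M[int]_m, weighing_matrix k W) ->
  (exists D : 'M[{mpoly R[u]}]_m, orthogonal_design s D) ->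
  (exists F : 'I_m -> 'M[{mpoly R[u]}]_(m * q),
     mutually_unbiased_ods (fun i => (k * s i)%N) ((k ^ 2)%:R : R) F)
  /\
  (forall S : {set 'I_u}, S != set0 ->
     exists F : 'I_m -> 'M[int]_(m * q),
       mutually_quasi_unbiased (k * \sum_(i in S) s i)%N (k ^ 2)%N
         (((\sum_(i in S) s i) ^ 2)%N%:R : R) F).
Proof.
move=> _ _ k_gt0 u_gt0 s_gt0 [p [e [p_prime [e_gt0 q_pe]]]] le_m_q [W hW] [D hD].
have [Fq _ card_Fq] := pPrimePowerField p_prime e_gt0.
have cardF : #|Fq| = q by rewrite card_Fq q_pe.
have [sg hsg] : exists sg : 'I_m -> {perm 'I_m * Fq}, spreading_family sg.
  by apply: exists_spreading_family; rewrite cardF.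
split.
  exists (fun i => tensor_perm_mx cardF (map_mx intr W) (sg i) D).
  by apply: mutually_unbiased_tensor_perm => //; exists (Ordinal u_gt0).
move=> S /set0Pn[l0 l0_S]; have [E hE] := orthogonal_design_specialize S hD.
exists (fun i => tensor_perm_mx cardF W (sg i) E).
by apply: mutually_quasi_unbiased_tensor_perm => //; rewrite (bigD1 l0) //= addn_gt0 s_gt0.
Qed.
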